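(* Let $F,K\ge1$ and $0\le Z<F$ be integers such that $\frac{K(F-Z)}{Z+1}$ is an integer, and suppose an RPDA$(F,K,Z)$ exists. Then an RPDA$(F,\ell K,Z)$ exists for every integer $\ell\ge1$.
   Context: A placement delivery array $S$-PDA$(F,K,Z)$ is an $F\times K$ array $R=(r_{j,k})$, $1\le j\le F$, $1\le k\le K$, over a finite set $S$ such that: (1) each cell is either empty or contains an element of $S$; (2) each column contains exactly $Z$ empty cells; (3) each element of $S$ occurs at most once in each row and at most once in each column; (4) if two distinct nonempty cells satisfy $r_{j_1,k_1}=r_{j_2,k_2}=t\in S$, then the cells $r_{j_1,k_2}$ and $r_{j_2,k_1}$ are empty. An RPDA$(F,K,Z)$ (restricted PDA) is an $S$-PDA$(F,K,Z)$ with $|S|=\left\lceil\frac{K(F-Z)}{Z+1}\right\rceil$. *)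

From mathcomp Require Import all_boot.
Set Implicit Arguments.
Unset Strict Implicit.
Unset Printing Implicit Defensive.

Definition ceil_div (a b : nat) : nat := (a + b.-1) %/ b.

(* An S-PDA(F,K,Z) with |S| = s: rows 'I_F, columns 'I_K, a cell is either
   empty (None) or contains an element of S = 'I_s (Some t). *)
Definition is_PDA (F K Z s : nat) (R : 'I_F -> 'I_K -> option 'I_s) : Prop :=
  (forall k : 'I_K, #|[set j : 'I_F | R j k == None]| = Z) /\
  (forall (j : 'I_F) (k1 k2 : 'I_K) (t : 'I_s),
      R j k1 = Some t -> R j k2 = Some t -> k1 = k2) /\
  (forall (k : 'I_K) (j1 j2 : 'I_F) (t : 'I_s),
      R j1 k = Some t -> R j2 k = Some t -> j1 = j2) /\
  (forall (j1 j2 : 'I_F) (k1 k2 : 'I_K) (t : 'I_s),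
      (j1, k1) <> (j2, k2) -> R j1 k1 = Some t -> R j2 k2 = Some t ->
      R j1 k2 = None /\ R j2 k1 = None).

Definition RPDA_exists (F K Z : nat) : Prop :=
  exists R : 'I_F -> 'I_K -> option 'I_(ceil_div (K * (F - Z)) Z.+1),
    is_PDA Z R.

From mathcomp Require Import all_boot.
From mathcomp Require Import matrix.

(* Place [l] copies of the array side by side and give each copy its own
   alphabet: column [(b, k)] of the new array is column [k] of the old one,
   with every symbol [t] renamed to [(b, t)].  Distinct copies share no
   symbol, so conditions (3) and (4) are inherited copy by copy, while the
   alphabet grows by the same factor [l] as the number of columns. *)

Lemma is_PDA_relabel (F K K' Z s s' : nat) (R : 'I_F -> 'I_K -> option 'I_s)
    (f : 'I_K' -> 'I_K) (g : 'I_K' -> 'I_s -> 'I_s') :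
  (forall c1 c2 t1 t2, g c1 t1 = g c2 t2 -> t1 = t2 /\ (f c1 = f c2 -> c1 = c2)) ->
  is_PDA Z R -> is_PDA Z (fun j c => omap (g c) (R j (f c))).
Proof.
move=> g_inj [R_empty [R_row [R_col R_pair]]].
have omap_some c j u : omap (g c) (R j (f c)) = Some u ->
    exists2 t, R j (f c) = Some t & g c t = u.
  by case: (R j (f c)) => [t [<-]|]//; exists t.
split; [|split; [|split]].
- move=> c; rewrite -(R_empty (f c)); apply: eq_card => j; rewrite !inE.
  by case: (R j (f c)).
- move=> j c1 c2 u /omap_some[t1 R1 <-] /omap_some[t2 R2 /esym/g_inj[et ef]].
  by subst t2; apply/ef/(R_row _ _ _ _ R1 R2).
- move=> c j1 j2 u /omap_some[t1 R1 <-] /omap_some[t2 R2 /esym/g_inj[et _]].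
  by subst t2; apply: (R_col _ _ _ _ R1 R2).
- move=> j1 j2 c1 c2 u ne /omap_some[t1 R1 <-] /omap_some[t2 R2 /esym/g_inj[et ef]].
  subst t2; have ne' : (j1, f c1) <> (j2, f c2).
    by case=> ej /ef ec; apply: ne; rewrite ej ec.
  by have [-> ->] := R_pair _ _ _ _ _ ne' R1 R2.
Qed.

Definition index_pair {m n : nat} (c : 'I_(m * n)) : 'I_m * 'I_n :=
  enum_val (cast_ord (esym (mxvec_cast m n)) c).

Lemma index_pair_inj (m n : nat) : injective (@index_pair m n).
Proof. by move=> c1 c2 /enum_val_inj/cast_ord_inj. Qed.

Lemma mxvec_index_inj (m n : nat) (b1 b2 : 'I_m) (t1 t2 : 'I_n) :
  mxvec_index b1 t1 = mxvec_index b2 t2 -> b1 = b2 /\ t1 = t2.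
Proof. by move/cast_ord_inj/enum_rank_inj => [-> ->]. Qed.

Lemma is_PDA_copies (F K Z s l : nat) (R : 'I_F -> 'I_K -> option 'I_s) :
  is_PDA Z R ->
  is_PDA Z (fun j (c : 'I_(l * K)) =>
    omap (mxvec_index (index_pair c).1) (R j (index_pair c).2)).
Proof.
apply: (@is_PDA_relabel _ _ _ _ _ _ R (fun c => (index_pair c).2)) => c1 c2 t1 t2.
move/mxvec_index_inj => [eb ->]; split=> // ek.
by apply: index_pair_inj; rewrite [index_pair c1]surjective_pairing eb ek -surjective_pairing.
Qed.

Lemma ceil_div_dvd (a b : nat) : 0 < b -> b %| a -> ceil_div a b = a %/ b.
Proof.
move=> b_gt0 /dvdnP[q ->]; rewrite /ceil_div mulnK // divnMDl // divn_small ?addn0 //.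
by rewrite prednK.
Qed.

Theorem mainTheorem7 (F K Z : nat) :
  1 <= F -> 1 <= K -> Z < F -> Z.+1 %| K * (F - Z) ->
  RPDA_exists F K Z ->
  forall l : nat, 1 <= l -> RPDA_exists F (l * K) Z.
Proof.
move=> _ _ _ dvd_size [R PDA_R] l _; rewrite /RPDA_exists.
have -> : ceil_div (l * K * (F - Z)) Z.+1 = l * ceil_div (K * (F - Z)) Z.+1.
  rewrite !ceil_div_dvd // -?mulnA ?muln_divA //.
  exact: dvdn_mull.
by eexists; apply: is_PDA_copies PDA_R.
Qed.
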